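(* Consider the 2-node network game with $\pi^M=W_{soc}$, $a_1=a_2=a>0$, $c_1=c_2=c>0$, $b_1,b_2>0$ with $1<b_1/b_2\le 3$, and $f_{12}=\infty$. Then the GNE is unique and is given by $$r^*=\frac{ac(b_2-b_1)}{(b_1+b_2)(b_1b_2+2c^2)+c(b_1^2+b_2^2+4b_1b_2)},\qquad q_1^*=\frac{a-b_1r^*}{2(b_1+c)},\qquad q_2^*=\frac{a+b_2r^*}{2(b_2+c)}.$$ At this GNE, $a-b_1r^*\ge 0$, $a+b_2r^*\ge0$, and $r^*=\frac{b_2q_2^*-b_1q_1^*}{b_1+b_2}$.
   Context: 2-node network game. There are generators $G_1,G_2$. Generator $k$ chooses $q_k\ge 0$ and has profit $\pi^G_k=q_kp_k(q_k+r_k)-c_kq_k^2$, where $p_k(d)=a_k-b_kd$. The market maker chooses $r\in\mathbb{R}$ and sets $r_1=r$, $r_2=-r$, subject to $-q_1\le r\le q_2$ (there is no line limit). Social welfare objective. The market maker maximizes $$W_{soc}(q,r)=\sum_k\Big(\int_0^{q_k+r_k}p_k(w)dw-c_kq_k^2\Big).$$ GNE. A triple $(q_1^*,q_2^*,r^* )$ with $r^*$ feasible given $q^*$ is a GNE if both of the following hold: - each $q_k^*$ maximizes $\pi^G_k$ over $q_k\ge0$, given the other generator's quantity and $r^*$; - $r^*$ maximizes $W_{soc}(q^*,\cdot)$ over the feasible set determined by $q^*$. *)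

From Stdlib Require Import Reals Lra.
Open Scope R_scope.

Definition price (a b d : R) : R := a - b * d.

(* Consumer benefit  int_0^d p_k(w) dw  for the affine demand p_k,
   written in closed form: a d - b d^2 / 2. *)
Definition benefit (a b d : R) : R := a * d - b * d ^ 2 / 2.

Definition profitG (a b c q rk : R) : R := q * price a b (q + rk) - c * q ^ 2.

(* Feasible set of the market maker: -q1 <= r <= q2, with r1 = r, r2 = -r
   (no line limit, f12 = infinity). *)
Definition feasible (q1 q2 r : R) : Prop := - q1 <= r /\ r <= q2.

Definition Wsoc (a1 b1 c1 a2 b2 c2 q1 q2 r : R) : R :=
  (benefit a1 b1 (q1 + r) - c1 * q1 ^ 2) + (benefit a2 b2 (q2 + - r) - c2 * q2 ^ 2).

Definition is_GNE (a1 b1 c1 a2 b2 c2 q1 q2 r : R) : Prop :=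
  0 <= q1 /\ 0 <= q2 /\ feasible q1 q2 r /\
  (forall q1', 0 <= q1' -> profitG a1 b1 c1 q1' r <= profitG a1 b1 c1 q1 r) /\
  (forall q2', 0 <= q2' -> profitG a2 b2 c2 q2' (- r) <= profitG a2 b2 c2 q2 (- r)) /\
  (forall r', feasible q1 q2 r' ->
     Wsoc a1 b1 c1 a2 b2 c2 q1 q2 r' <= Wsoc a1 b1 c1 a2 b2 c2 q1 q2 r).

(** Both objectives are concave quadratics, so each player's best reply is read off by completing
    the square: generator k produces [(a - b_k r_k) / (2 (b_k + c))] when that is nonnegative and
    nothing otherwise, and the market maker ships [(b2 q2 - b1 q1) / (b1 + b2)], which is always
    feasible.  A corner reply of a generator is incompatible with the market maker's flow, so at any
    GNE all three replies are interior and the GNE solves a 3x3 linear system whose determinant is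
    positive.  Its solution has both margins [a - b1 r] and [a + b2 r] positive, hence is a GNE.
    The argument works for all positive [b1], [b2]. *)
From Stdlib Require Import Reals Lra Psatz.
Open Scope R_scope.

Definition best_response (a b c rk : R) : R := (a - b * rk) / (2 * (b + c)).

Definition welfare_flow (b1 b2 q1 q2 : R) : R := (b2 * q2 - b1 * q1) / (b1 + b2).

Definition gne_denom (b1 b2 c : R) : R :=
  (b1 + b2) * (b1 * b2 + 2 * c ^ 2) + c * (b1 ^ 2 + b2 ^ 2 + 4 * b1 * b2).

Definition gne_flow (a b1 b2 c : R) : R := a * c * (b2 - b1) / gne_denom b1 b2 c.

Lemma profitG_complete_square a b c q rk : b + c <> 0 ->
  profitG a b c q rk =
  profitG a b c (best_response a b c rk) rk - (b + c) * (q - best_response a b c rk) ^ 2.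
Proof. intros Hbc; unfold profitG, price, best_response; field; exact Hbc. Qed.

Lemma best_response_maximizes a b c rk : 0 < b + c -> 0 <= a - b * rk ->
  0 <= best_response a b c rk /\
  forall q, 0 <= q -> profitG a b c q rk <= profitG a b c (best_response a b c rk) rk.
Proof.
  intros Hbc Hmargin; split.
  - unfold best_response; apply Rmult_le_pos; [lra |].
    apply Rlt_le, Rinv_0_lt_compat; lra.
  - intros q _; rewrite (profitG_complete_square a b c q rk) by lra.
    pose proof (pow2_ge_0 (q - best_response a b c rk)); nra.
Qed.

Lemma profitG_maximizer_kkt a b c q rk : 0 < b -> 0 < c -> 0 <= q ->
  (forall q', 0 <= q' -> profitG a b c q' rk <= profitG a b c q rk) ->
  a - b * rk <= 2 * (b + c) * q /\ q * (2 * (b + c) * q - (a - b * rk)) = 0.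
Proof.
  intros Hb Hc Hq Hmax.
  destruct (Rle_or_lt 0 (a - b * rk)) as [Hmargin | Hmargin].
  - destruct (best_response_maximizes a b c rk) as [Hbr _]; [lra | exact Hmargin |].
    specialize (Hmax _ Hbr).
    rewrite (profitG_complete_square a b c q rk) in Hmax by lra.
    assert (Hsq : (q - best_response a b c rk) ^ 2 = 0)
      by (pose proof (pow2_ge_0 (q - best_response a b c rk)); nra).
    assert (Hq_br : q = best_response a b c rk) by nra.
    assert (Hfoc : 2 * (b + c) * q = a - b * rk)
      by (rewrite Hq_br; unfold best_response; field; lra).
    rewrite Hfoc; split; lra.
  - specialize (Hmax 0 (Rle_refl 0)); unfold profitG, price in Hmax.
    assert (Hq0 : q = 0) by nra.
    rewrite Hq0; split; lra.
Qed.

Lemma Wsoc_complete_square a b1 b2 c q1 q2 r : b1 + b2 <> 0 ->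
  Wsoc a b1 c a b2 c q1 q2 r =
  Wsoc a b1 c a b2 c q1 q2 (welfare_flow b1 b2 q1 q2)
  - (b1 + b2) / 2 * (r - welfare_flow b1 b2 q1 q2) ^ 2.
Proof. intros Hb; unfold Wsoc, benefit, welfare_flow; field; exact Hb. Qed.

Lemma welfare_flow_feasible b1 b2 q1 q2 : 0 < b1 -> 0 < b2 -> 0 <= q1 -> 0 <= q2 ->
  feasible q1 q2 (welfare_flow b1 b2 q1 q2).
Proof.
  intros Hb1 Hb2 Hq1 Hq2.
  assert (E : welfare_flow b1 b2 q1 q2 * (b1 + b2) = b2 * q2 - b1 * q1)
    by (unfold welfare_flow; field; lra).
  unfold feasible; split; nra.
Qed.

Lemma welfare_flow_maximizes a b1 b2 c q1 q2 r : 0 < b1 + b2 ->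
  Wsoc a b1 c a b2 c q1 q2 r <= Wsoc a b1 c a b2 c q1 q2 (welfare_flow b1 b2 q1 q2).
Proof.
  intros Hb; rewrite (Wsoc_complete_square a b1 b2 c q1 q2 r) by lra.
  assert (0 <= (b1 + b2) / 2 * (r - welfare_flow b1 b2 q1 q2) ^ 2)
    by (apply Rmult_le_pos; [lra | apply pow2_ge_0]).
  lra.
Qed.

Lemma Wsoc_maximizer_flow a b1 b2 c q1 q2 r : 0 < b1 -> 0 < b2 -> 0 <= q1 -> 0 <= q2 ->
  (forall r', feasible q1 q2 r' -> Wsoc a b1 c a b2 c q1 q2 r' <= Wsoc a b1 c a b2 c q1 q2 r) ->
  (b1 + b2) * r = b2 * q2 - b1 * q1.
Proof.
  intros Hb1 Hb2 Hq1 Hq2 Hmax.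
  specialize (Hmax _ (welfare_flow_feasible b1 b2 q1 q2 Hb1 Hb2 Hq1 Hq2)).
  rewrite (Wsoc_complete_square a b1 b2 c q1 q2 r) in Hmax by lra.
  assert (Hsq : (r - welfare_flow b1 b2 q1 q2) ^ 2 = 0)
    by (pose proof (pow2_ge_0 (r - welfare_flow b1 b2 q1 q2)); nra).
  assert (Hr : r = welfare_flow b1 b2 q1 q2) by nra.
  rewrite Hr; unfold welfare_flow; field; lra.
Qed.

(** If generator [k] sits at the corner [q_k = 0] (so [a <= b_k r_k]), the market maker exports
    to its node, and the other generator would have to over-produce to supply that flow.  Stated
    for generator 1; generator 2 is the case [r := - r]. *)
Lemma corner_supply_excluded a b b' c q' r : 0 < a -> 0 < b -> 0 < b' -> 0 < c -> 0 <= q' ->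
  a <= b * r -> (b + b') * r = b' * q' ->
  a + b' * r <= 2 * (b' + c) * q' -> q' * (2 * (b' + c) * q' - (a + b' * r)) = 0 -> False.
Proof.
  intros Ha Hb Hb' Hc Hq' Hcorner Hflow Hge Hcompl.
  assert (Hr : 0 < r) by nra.
  assert (Hq'pos : 0 < q') by nra.
  assert (Hfoc : 2 * (b' + c) * q' = a + b' * r) by nra.
  nra.
Qed.

Lemma is_GNE_first_order a b1 b2 c q1 q2 r : 0 < a -> 0 < b1 -> 0 < b2 -> 0 < c ->
  is_GNE a b1 c a b2 c q1 q2 r ->
  2 * (b1 + c) * q1 = a - b1 * r /\ 2 * (b2 + c) * q2 = a + b2 * r /\
  (b1 + b2) * r = b2 * q2 - b1 * q1.
Proof.
  intros Ha Hb1 Hb2 Hc [Hq1 [Hq2 [_ [Hmax1 [Hmax2 HmaxW]]]]].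
  pose proof (Wsoc_maximizer_flow a b1 b2 c q1 q2 r Hb1 Hb2 Hq1 Hq2 HmaxW) as Hflow.
  destruct (profitG_maximizer_kkt a b1 c q1 r Hb1 Hc Hq1 Hmax1) as [Hge1 Hcompl1].
  destruct (profitG_maximizer_kkt a b2 c q2 (- r) Hb2 Hc Hq2 Hmax2) as [Hge2 Hcompl2].
  replace (a - b2 * - r) with (a + b2 * r) in Hge2, Hcompl2 by ring.
  assert (Hfoc1 : 2 * (b1 + c) * q1 = a - b1 * r).
  { destruct (Rmult_integral _ _ Hcompl1) as [Hq1_0 | ]; [| lra].
    exfalso; apply (corner_supply_excluded a b1 b2 c q2 r); try assumption; nra. }
  assert (Hfoc2 : 2 * (b2 + c) * q2 = a + b2 * r).
  { destruct (Rmult_integral _ _ Hcompl2) as [Hq2_0 | ]; [| lra].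
    exfalso; apply (corner_supply_excluded a b2 b1 c q1 (- r)); try assumption; nra. }
  repeat split; assumption.
Qed.

Lemma gne_denom_pos b1 b2 c : 0 < b1 -> 0 < b2 -> 0 < c -> 0 < gne_denom b1 b2 c.
Proof.
  intros Hb1 Hb2 Hc; unfold gne_denom.
  assert (0 < b1 * b2) by nra; assert (0 < c ^ 2) by nra;
  assert (0 < b1 ^ 2) by nra; assert (0 < b2 ^ 2) by nra.
  nra.
Qed.

Lemma first_order_flow_eq a b1 b2 c q1 q2 r :
  2 * (b1 + c) * q1 = a - b1 * r -> 2 * (b2 + c) * q2 = a + b2 * r ->
  (b1 + b2) * r = b2 * q2 - b1 * q1 ->
  r * gne_denom b1 b2 c = a * c * (b2 - b1).
Proof.
  intros Hfoc1 Hfoc2 Hflow.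
  assert (Id : r * gne_denom b1 b2 c - a * c * (b2 - b1) =
     2 * (b1 + c) * (b2 + c) * ((b1 + b2) * r - (b2 * q2 - b1 * q1))
     + b2 * (b1 + c) * (2 * (b2 + c) * q2 - (a + b2 * r))
     - b1 * (b2 + c) * (2 * (b1 + c) * q1 - (a - b1 * r)))
    by (unfold gne_denom; ring).
  rewrite Hfoc1, Hfoc2, Hflow in Id; lra.
Qed.

Lemma gne_flow_margins a b1 b2 c : 0 < a -> 0 < b1 -> 0 < b2 -> 0 < c ->
  0 < a - b1 * gne_flow a b1 b2 c /\ 0 < a + b2 * gne_flow a b1 b2 c.
Proof.
  intros Ha Hb1 Hb2 Hc; pose proof (gne_denom_pos b1 b2 c Hb1 Hb2 Hc) as HD.
  assert (E1 : a - b1 * gne_flow a b1 b2 c = a * (gne_denom b1 b2 c - b1 * c * (b2 - b1))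
                                              / gne_denom b1 b2 c)
    by (unfold gne_flow; field; lra).
  assert (E2 : a + b2 * gne_flow a b1 b2 c = a * (gne_denom b1 b2 c + b2 * c * (b2 - b1))
                                              / gne_denom b1 b2 c)
    by (unfold gne_flow; field; lra).
  assert (Hbase : 0 < (b1 + b2) * (b1 * b2 + 2 * c ^ 2))
    by (apply Rmult_lt_0_compat; [lra | assert (0 < b1 * b2) by nra; nra]).
  assert (Hm1 : 0 < gne_denom b1 b2 c - b1 * c * (b2 - b1)).
  { replace (gne_denom b1 b2 c - b1 * c * (b2 - b1))
      with ((b1 + b2) * (b1 * b2 + 2 * c ^ 2) + c * (2 * b1 ^ 2 + b2 ^ 2 + 3 * b1 * b2))
      by (unfold gne_denom; ring).
    assert (0 < c * (2 * b1 ^ 2 + b2 ^ 2 + 3 * b1 * b2))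
      by (apply Rmult_lt_0_compat; [lra | assert (0 < b1 * b2) by nra; nra]).
    lra. }
  assert (Hm2 : 0 < gne_denom b1 b2 c + b2 * c * (b2 - b1)).
  { replace (gne_denom b1 b2 c + b2 * c * (b2 - b1))
      with ((b1 + b2) * (b1 * b2 + 2 * c ^ 2) + c * (b1 ^ 2 + 2 * b2 ^ 2 + 3 * b1 * b2))
      by (unfold gne_denom; ring).
    assert (0 < c * (b1 ^ 2 + 2 * b2 ^ 2 + 3 * b1 * b2))
      by (apply Rmult_lt_0_compat; [lra | assert (0 < b1 * b2) by nra; nra]).
    lra. }
  rewrite E1, E2; split; apply Rdiv_lt_0_compat; nra.
Qed.

Lemma gne_flow_fixed_point a b1 b2 c : 0 < b1 -> 0 < b2 -> 0 < c ->
  gne_flow a b1 b2 c =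
  welfare_flow b1 b2 (best_response a b1 c (gne_flow a b1 b2 c))
                     (best_response a b2 c (- gne_flow a b1 b2 c)).
Proof.
  intros Hb1 Hb2 Hc; pose proof (gne_denom_pos b1 b2 c Hb1 Hb2 Hc) as HD.
  unfold gne_denom in HD; unfold welfare_flow, best_response, gne_flow, gne_denom.
  field; repeat split; lra.
Qed.

Lemma is_GNE_of_first_order a b1 b2 c q1 q2 r : 0 < b1 -> 0 < b2 -> 0 < c ->
  0 <= a - b1 * r -> 0 <= a + b2 * r ->
  q1 = best_response a b1 c r -> q2 = best_response a b2 c (- r) ->
  r = welfare_flow b1 b2 q1 q2 ->
  is_GNE a b1 c a b2 c q1 q2 r.
Proof.
  intros Hb1 Hb2 Hc Hm1 Hm2 Hq1def Hq2def Hflow.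
  destruct (best_response_maximizes a b1 c r) as [Hq1 Hmax1]; [lra | exact Hm1 |].
  destruct (best_response_maximizes a b2 c (- r)) as [Hq2 Hmax2]; [lra | lra |].
  rewrite <- Hq1def in Hq1, Hmax1; rewrite <- Hq2def in Hq2, Hmax2.
  split; [exact Hq1 |]; split; [exact Hq2 |].
  split; [rewrite Hflow; apply welfare_flow_feasible; assumption |].
  split; [exact Hmax1 |]; split; [exact Hmax2 |].
  intros r' _; rewrite Hflow; apply welfare_flow_maximizes; lra.
Qed.

Theorem mainTheorem4 (a b1 b2 c : R) :
  0 < a -> 0 < c -> 0 < b1 -> 0 < b2 -> 1 < b1 / b2 -> b1 / b2 <= 3 ->
  let r0 := a * c * (b2 - b1) /
            ((b1 + b2) * (b1 * b2 + 2 * c ^ 2) + c * (b1 ^ 2 + b2 ^ 2 + 4 * b1 * b2)) in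
  let q10 := (a - b1 * r0) / (2 * (b1 + c)) in
  let q20 := (a + b2 * r0) / (2 * (b2 + c)) in
  is_GNE a b1 c a b2 c q10 q20 r0 /\
  (forall q1 q2 r, is_GNE a b1 c a b2 c q1 q2 r -> q1 = q10 /\ q2 = q20 /\ r = r0) /\
  0 <= a - b1 * r0 /\ 0 <= a + b2 * r0 /\
  r0 = (b2 * q20 - b1 * q10) / (b1 + b2).
Proof.
  intros Ha Hc Hb1 Hb2 _ _ r0 q10 q20.
  change r0 with (gne_flow a b1 b2 c) in q10, q20 |- *.
  destruct (gne_flow_margins a b1 b2 c Ha Hb1 Hb2 Hc) as [Hm1 Hm2].
  assert (Hq20 : q20 = best_response a b2 c (- gne_flow a b1 b2 c))
    by (unfold q20, best_response; f_equal; ring).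
  assert (Hflow : gne_flow a b1 b2 c = welfare_flow b1 b2 q10 q20)
    by (rewrite Hq20; exact (gne_flow_fixed_point a b1 b2 c Hb1 Hb2 Hc)).
  split; [| split; [| split; [| split]]]; [| | lra | lra | exact Hflow].
  - apply is_GNE_of_first_order; [lra | lra | lra | lra | lra | reflexivity | exact Hq20 | exact Hflow].
  - intros q1 q2 r HGNE.
    destruct (is_GNE_first_order a b1 b2 c q1 q2 r Ha Hb1 Hb2 Hc HGNE) as [Hfoc1 [Hfoc2 Hfl]].
    pose proof (gne_denom_pos b1 b2 c Hb1 Hb2 Hc) as HD.
    assert (Hr : r = gne_flow a b1 b2 c).
    { unfold gne_flow; apply (Rmult_eq_reg_r (gne_denom b1 b2 c)); [| lra].
      rewrite (first_order_flow_eq a b1 b2 c q1 q2 r Hfoc1 Hfoc2 Hfl); field; lra. }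
    unfold q10, q20; rewrite <- Hr, <- Hfoc1, <- Hfoc2.
    split; [| split]; [field | field | reflexivity]; lra.
Qed.
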